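(* Let $\mathbb{K}$ be a field of characteristic zero and $(n_1,\dots,n_t)$ a tuple of integers. If $(n_1,\dots,n_t)$ forms an $\mathfrak{sl}_2$-chained Lie algebra, then for every $1\le k\le t$ the truncated tuple $(n_1,\dots,n_k)$ also forms an $\mathfrak{sl}_2$-chained Lie algebra.
   Context: For $d\ge0$, $V_d\subset\mathbb{K}[x,y]$ is the space of homogeneous polynomials of degree $d$, an $\mathfrak{sl}_2(\mathbb{K})$-module with $\mathfrak{sl}_2(\mathbb{K})$ identified with the span of $x\frac{\partial}{\partial y}$, $y\frac{\partial}{\partial x}$, $x\frac{\partial}{\partial x}-y\frac{\partial}{\partial y}$. For $f\in V_n$, $g\in V_m$, $0\le k\le\min(n,m)$, the transvection is $(f,g)_k=\frac{(m-k)!}{m!}\frac{(n-k)!}{n!}\sum_{i=0}^{k}(-1)^i\binom{k}{i}\frac{\partial^kf}{\partial x^{k-i}\partial y^{i}}\frac{\partial^kg}{\partial x^{i}\partial y^{k-i}}\in V_{n+m-2k}$. Given $(n_1,\dots,n_t)$ put $m_i=V_{d_i}$ with $d_i=in_1-2(n_2+\cdots+n_i)$ and $c_{ijk}=\frac{d_i+d_j-d_k}{2}$. The tuple forms an $\mathfrak{sl}_2$-chained Lie algebra if all $d_i\ge0$ and there are scalars $\alpha_{ijk}\in\mathbb{K}$ ($1\le i\le j$, $i+j\le k\le t$), with $\alpha_{1,j,j+1}\ne0$ for $j=1,\dots,t-1$ and $\alpha_{ijk}=0$ whenever $(\cdot,\cdot)_{c_{ijk}}$ is undefined or (for $i=j$)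 not skew-symmetric, such that the bracket on $\mathfrak{g}=\mathfrak{sl}_2(\mathbb{K})\oplus m_1\oplus\cdots\oplus m_t$ given by the commutator on $\mathfrak{sl}_2(\mathbb{K})$, $[s,u]=-[u,s]=s(u)$ for $s\in\mathfrak{sl}_2(\mathbb{K})$, and $[u,v]=-[v,u]=\sum_{k=i+j}^t\alpha_{ijk}(u,v)_{c_{ijk}}$ for $u\in m_i$, $v\in m_j$, $i\le j$, makes $\mathfrak{g}$ a Lie algebra whose lattice of ideals is the chain $0<m_t<m_{t-1}\oplus m_t<\cdots<m_1\oplus\cdots\oplus m_t<\mathfrak{g}$. *)

From HB Require Import structures.
From mathcomp Require Import all_boot all_order all_algebra.
From mathcomp Require Import mpoly.

Set Implicit Arguments.
Unset Strict Implicit.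
Unset Printing Implicit Defensive.

Import Order.TTheory GRing.Theory Num.Theory.
Local Open Scope ring_scope.

Section Sl2Chained.
Context (K : fieldType).

Local Notation P := {mpoly K[2]}.

Definition xv : P := 'X_(0 : 'I_2).
Definition yv : P := 'X_(1 : 'I_2).
Definition dx (p : P) : P := mderiv (0 : 'I_2) p.
Definition dy (p : P) : P := mderiv (1 : 'I_2) p.

(* V_d : homogeneous polynomials of degree d (0 included). *)
Definition inV (d : nat) (p : P) : bool := p \is d.-homog.

Definition pder (a b : nat) (p : P) : P := iter a dx (iter b dy p).

Definition transv (n m k : nat) (f g : P) : P :=
  (((m - k)`!%:R / (m`!)%:R) * (((n - k)`!)%:R / (n`!)%:R)) *:
  \sum_(i < k.+1) (((-1) ^+ i * ('C(k, i))%:R) *: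
                   (pder (k - i) i f * pder i (k - i) g)).

(* d_i = i n_1 - 2 (n_2 + ... + n_i), tuple stored 0-indexed in a seq *)
Definition dd (n : seq int) (i : nat) : int :=
  (i%:Z * n`_0 - 2%:Z * \sum_(1 <= l < i) n`_l)%R.

(* c_{ijk} = (d_i + d_j - d_k)/2, when (.,.)_{c_{ijk}} is defined on
   V_{d_i} x V_{d_j}, i.e. c_{ijk} is an integer with 0 <= c <= min(d_i,d_j) *)
Definition cdef (n : seq int) (i j k : nat) : option nat :=
  let s := (dd n i + dd n j - dd n k)%R in
  if [&& (2 %| s)%Z, (0 <= s)%R & (s <= 2%:Z * Num.min (dd n i) (dd n j))%R]
  then Some (absz s %/ 2)%N else None.

(* (u,v)_{c_{ijk}} for u in m_i, v in m_j (0 when undefined; then alpha = 0) *)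
Definition trm (n : seq int) (i j k : nat) (u v : P) : P :=
  match cdef n i j k with
  | Some c => transv (absz (dd n i)) (absz (dd n j)) c u v
  | None => 0
  end.

(* sl2 element (a,b,c) := a x d/dy + b y d/dx + c (x d/dx - y d/dy) *)
Definition sl2 := (K * K * K)%type.

Definition act (s : sl2) (p : P) : P :=
  let: (a, b, c) := s in
  a *: (xv * dy p) + b *: (yv * dx p) + c *: (xv * dx p - yv * dy p).

(* commutator: with E = x d/dy, F = y d/dx, H = x d/dx - y d/dy,
   [E,F] = H, [H,E] = 2E, [H,F] = -2F *)
Definition sl2br (s s' : sl2) : sl2 :=
  let: (a, b, c) := s in let: (a', b', c') := s' in
  (2%:R * (c * a' - a * c'), 2%:R * (b * c' - c * b'), a * b' - b * a').

(* elements of g = sl2 + m_1 + ... + m_t: component i of the function is the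
   m_i-part (required zero outside 1..t) *)
Definition gel := (sl2 * (nat -> P))%type.

Definition inG (n : seq int) (e : gel) : Prop :=
  forall i, ((1 <= i <= size n)%N -> inV (absz (dd n i)) (e.2 i)) /\
            (~~ (1 <= i <= size n)%N -> e.2 i = 0).

Definition gzero : gel := ((0, 0, 0), fun _ => 0).
Definition gadd (e e' : gel) : gel :=
  let: ((a, b, c), u) := e in let: ((a', b', c'), u') := e' in
  ((a + a', b + b', c + c'), fun i => u i + u' i).
Definition gscale (r : K) (e : gel) : gel :=
  let: ((a, b, c), u) := e in ((r * a, r * b, r * c), fun i => r *: u i).

(* the bracket determined by the scalars alpha, extended bilinearly:
   [s,u] = s(u) = -[u,s], and for u in m_i, v in m_j:
   [u,v] = sum_k alpha_{ijk} (u,v)_{c_{ijk}} if i <= j, and -[v,u] if i > j *)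
Definition gbr (n : seq int) (alpha : nat -> nat -> nat -> K) (e e' : gel)
  : gel :=
  (sl2br e.1 e'.1,
   fun k => if (1 <= k <= size n)%N then
     act e.1 (e'.2 k) - act e'.1 (e.2 k) +
     \sum_(1 <= i < (size n).+1) \sum_(1 <= j < (size n).+1 | (i + j <= k)%N)
        (if (i <= j)%N then alpha i j k *: trm n i j k (e.2 i) (e'.2 j)
         else - (alpha j i k *: trm n j i k (e'.2 j) (e.2 i)))
   else 0).

Definition alpha_ok (n : seq int) (alpha : nat -> nat -> nat -> K) : Prop :=
  forall i j k, (1 <= i <= j)%N -> (i + j <= k <= size n)%N ->
    alpha i j k != 0 ->
    exists c, cdef n i j k = Some c /\
      (i = j -> forall f g, inV (absz (dd n i)) f -> inV (absz (dd n i)) g ->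
         transv (absz (dd n i)) (absz (dd n i)) c f g =
         - transv (absz (dd n i)) (absz (dd n i)) c g f).

(* g is a Lie algebra (the bracket is bilinear by construction) *)
Definition is_lie (n : seq int) alpha : Prop :=
  (forall e, inG n e -> gbr n alpha e e = gzero) /\
  (forall x y z, inG n x -> inG n y -> inG n z ->
     gadd (gadd (gbr n alpha x (gbr n alpha y z))
                (gbr n alpha y (gbr n alpha z x)))
          (gbr n alpha z (gbr n alpha x y)) = gzero).

Definition is_ideal (n : seq int) alpha (I : gel -> Prop) : Prop :=
  [/\ (forall e, I e -> inG n e), I gzero,
      (forall e e', I e -> I e' -> I (gadd e e')),
      (forall r e, I e -> I (gscale r e)) &
      (forall x e, inG n x -> I e -> I (gbr n alpha x e))].

(* m_k + m_{k+1} + ... + m_t  (k = t+1 gives 0) *)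
Definition tail_part (n : seq int) (k : nat) (e : gel) : Prop :=
  [/\ inG n e, e.1 = (0, 0, 0) & forall i, (i < k)%N -> e.2 i = 0].

Definition ideals_chain (n : seq int) alpha : Prop :=
  forall I : gel -> Prop, is_ideal n alpha I <->
    ((forall e, I e <-> inG n e) \/
     exists k, (1 <= k <= (size n).+1)%N /\ forall e, I e <-> tail_part n k e).

Definition sl2_chained (n : seq int) : Prop :=
  (forall i, (1 <= i <= size n)%N -> (0 <= dd n i)%R) /\
  exists alpha : nat -> nat -> nat -> K,
    [/\ alpha_ok n alpha,
        (forall j, (1 <= j < size n)%N -> alpha 1%N j j.+1 != 0),
        is_lie n alpha &
        ideals_chain n alpha].

End Sl2Chained.

From HB Require Import structures.
From mathcomp Require Import all_boot all_order all_algebra.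
From mathcomp Require Import mpoly.
From mathcomp Require Import zify.
From Stdlib Require Import FunctionalExtensionality.

Set Implicit Arguments.
Unset Strict Implicit.
Unset Printing Implicit Defensive.

Import GRing.Theory.
Local Open Scope ring_scope.

(* Since [m_i, m_j] lies in m_(i+j) + ... + m_t, the subspace
   m_(k+1) + ... + m_t is an ideal and the projection [trunc] forgetting it is
   a Lie algebra morphism onto the algebra of (n_1, ..., n_k), with the same
   scalars alpha.  Ideals of the quotient correspond to the ideals of g that
   contain the kernel, and these form the chain m_k' + ... + m_t, k' <= k + 1. *)

Lemma sum_triangle_shrink (V : nmodType) (F : nat -> nat -> V) M m :
  (m <= M)%N ->
  \sum_(1 <= i < M.+1) \sum_(1 <= j < M.+1 | (i + j <= m)%N) F i j =
  \sum_(1 <= i < m.+1) \sum_(1 <= j < m.+1 | (i + j <= m)%N) F i j.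
Proof.
move=> le_mM.
have split_at_m (G : nat -> V) (Q : pred nat) :
    \sum_(1 <= i < M.+1 | Q i) G i =
    \sum_(1 <= i < m.+1 | Q i) G i + \sum_(m.+1 <= i < M.+1 | Q i) G i.
  by rewrite (big_cat_nat _ (n := m.+1)).
rewrite split_at_m [X in _ + X]big_nat_cond [X in _ + X]big1 ?addr0; last first.
  by move=> i /andP[/andP[lt_mi _] _]; rewrite big1 // => j ?; lia.
apply: eq_bigr => i _.
rewrite split_at_m [X in _ + X]big_nat_cond [X in _ + X]big1 ?addr0 //.
by move=> j /andP[/andP[lt_mj _] le_ijm]; lia.
Qed.

Lemma is_ideal_ext (K : fieldType) (n : seq int) alpha (I I' : gel K -> Prop) :
  (forall e, I e <-> I' e) -> is_ideal n alpha I' -> is_ideal n alpha I.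
Proof.
move=> eqII' [sub0 I0 ID IZ Ibr]; split.
- by move=> e /eqII'; apply: sub0.
- exact/eqII'.
- by move=> e e' /eqII' ? /eqII' ?; apply/eqII'; apply: ID.
- by move=> r e /eqII' ?; apply/eqII'; apply: IZ.
- by move=> x e ? /eqII' ?; apply/eqII'; apply: Ibr.
Qed.

Section Truncation.
Variables (K : fieldType) (n : seq int) (k : nat).
Hypotheses (k_gt0 : (0 < k)%N) (le_k_size : (k <= size n)%N).
Local Notation nk := (take k n).
Local Notation scalars := (nat -> nat -> nat -> K).

Let size_nk : size nk = k := size_takel le_k_size.

Definition trunc (e : gel K) : gel K :=
  (e.1, fun i => if (i <= k)%N then e.2 i else 0).

Lemma dd_take i : (i <= k)%N -> dd nk i = dd n i.
Proof.
move=> le_ik; rewrite /dd nth_take //; congr (_ - _ * _).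
by apply: eq_big_nat => l /andP[_ lt_li]; rewrite nth_take //; lia.
Qed.

Lemma cdef_take i j l : (i <= k)%N -> (j <= k)%N -> (l <= k)%N ->
  cdef nk i j l = cdef n i j l.
Proof. by move=> le_ik le_jk le_lk; rewrite /cdef !dd_take. Qed.

Lemma trm_take i j l : (i <= k)%N -> (j <= k)%N -> (l <= k)%N ->
  trm nk i j l = trm n i j l :> ({mpoly K[2]} -> _ -> _).
Proof. by move=> le_ik le_jk le_lk; rewrite /trm cdef_take ?dd_take. Qed.

Lemma gbr_trunc (alpha : scalars) a b :
  gbr nk alpha (trunc a) (trunc b) = trunc (gbr n alpha a b).
Proof.
rewrite /gbr /trunc /=; congr pair; apply: functional_extensionality => l.
rewrite size_nk; have [le_lk|] := boolP (l <= k)%N; last first.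
  by case: (1 <= l)%N => //= /negbTE ->.
have [le1l /=|//] := boolP (1 <= l)%N.
rewrite (leq_trans le_lk le_k_size); congr (_ + _).
rewrite (sum_triangle_shrink _ le_lk).
rewrite (sum_triangle_shrink _ (leq_trans le_lk le_k_size)).
apply: eq_bigr => i _; rewrite big_nat_cond [in RHS]big_nat_cond.
apply: eq_bigr => j /andP[/andP[le1j _] le_ijl].
have le_ik : (i <= k)%N by lia.
have le_jk : (j <= k)%N by lia.
by rewrite le_ik le_jk !trm_take.
Qed.

Lemma trunc_gadd a b : trunc (gadd a b) = gadd (trunc a) (trunc b).
Proof.
case: a b => [[[? ?] ?] u] [[[? ?] ?] v]; rewrite /trunc /gadd /=.
by congr pair; apply: functional_extensionality => i; case: ifP; rewrite ?addr0.
Qed.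

Lemma trunc_gscale r a : trunc (gscale r a) = gscale r (trunc a).
Proof.
case: a => [[[? ?] ?] u]; rewrite /trunc /gscale /=.
by congr pair; apply: functional_extensionality => i; case: ifP; rewrite ?scaler0.
Qed.

Lemma trunc_gzero : trunc (gzero K) = gzero K.
Proof. by congr pair; apply: functional_extensionality => i; case: ifP. Qed.

Lemma inG_take (e : gel K) :
  inG nk e <-> inG n e /\ (forall i, (k < i)%N -> e.2 i = 0).
Proof.
rewrite /inG size_nk; split=> [Gk | [Gn vanish] i].
  split=> [i|i lt_ki]; last by apply: (proj2 (Gk i)); lia.
  have [in_k | out_k] := boolP (1 <= i <= k)%N.
    have := proj1 (Gk i) in_k; rewrite dd_take; last by case/andP: in_k.
    by split=> // /negP[]; lia.
  by rewrite (proj2 (Gk i) out_k); split=> // _; apply: rpred0.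
split=> [in_k | out_k].
  by rewrite dd_take; [apply: (proj1 (Gn i)); lia | case/andP: in_k].
have [in_n | out_n] := boolP (1 <= i <= size n)%N; last exact: (proj2 (Gn i)).
by apply: vanish; lia.
Qed.

Lemma inG_trunc (e : gel K) : inG n e -> inG nk (trunc e).
Proof.
move=> Gn; apply/inG_take; split=> [i | i lt_ki]; last by rewrite /= leqNgt lt_ki.
have [Gin Gout] := Gn i; split=> [in_n | out_n] /=.
  by case: ifP => _; [apply: Gin | apply: rpred0].
by rewrite (Gout out_n); case: ifP.
Qed.

Lemma trunc_id (e : gel K) : inG nk e -> trunc e = e.
Proof.
case/inG_take=> _; case: e => s u vanish; rewrite /trunc /=.
congr pair; apply: functional_extensionality => i.
by case: leqP => // /vanish.
Qed.

Lemma dd_ge0_take :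
  (forall i, (1 <= i <= size n)%N -> (0 <= dd n i)%R) ->
  forall i, (1 <= i <= size nk)%N -> (0 <= dd nk i)%R.
Proof.
move=> dd_ge0 i; rewrite size_nk => /andP[le1i le_ik].
by rewrite dd_take // dd_ge0 // le1i (leq_trans le_ik).
Qed.

Lemma alpha_ok_take (alpha : scalars) : alpha_ok n alpha -> alpha_ok nk alpha.
Proof.
move=> ok i j l /[dup] le_ij /andP[le1i le_ij']; rewrite size_nk.
move=> /andP[le_ijl le_lk] nz_alpha.
have [|c [cdef_c skew]] := ok i j l le_ij _ nz_alpha.
  by rewrite le_ijl (leq_trans le_lk).
have le_ik : (i <= k)%N by lia.
have le_jk : (j <= k)%N by lia.
by exists c; rewrite cdef_take // dd_take.
Qed.

Lemma is_lie_take (alpha : scalars) : is_lie n alpha -> is_lie nk alpha.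
Proof.
have inG_n (e : gel K) : inG nk e -> inG n e by case/inG_take.
move=> [alt jacobi]; split=> [e Ge | x y z Gx Gy Gz].
  by rewrite -(trunc_id Ge) gbr_trunc alt ?trunc_gzero //; apply: inG_n.
rewrite -(trunc_id Gx) -(trunc_id Gy) -(trunc_id Gz) !gbr_trunc -!trunc_gadd.
by rewrite jacobi ?trunc_gzero //; apply: inG_n.
Qed.

Lemma is_ideal_restrict (alpha : scalars) (J : gel K -> Prop) :
  is_ideal n alpha J -> (forall e, J e -> J (trunc e)) ->
  is_ideal nk alpha (fun e => J e /\ inG nk e).
Proof.
move=> [Jsub J0 JD JZ Jbr] J_trunc.
have J_restrict e : J e -> J (trunc e) /\ inG nk (trunc e).
  by move=> Je; split; [apply: J_trunc | apply/inG_trunc/Jsub].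
split.
- by move=> e [].
- by rewrite -trunc_gzero; apply: J_restrict.
- move=> e e' [Je Ge] [Je' Ge'].
  by rewrite -(trunc_id Ge) -(trunc_id Ge') -trunc_gadd; apply/J_restrict/JD.
- move=> r e [Je Ge].
  by rewrite -(trunc_id Ge) -trunc_gscale; apply/J_restrict/JZ.
- move=> x e Gx [Je Ge]; have [Gnx _] := proj1 (inG_take x) Gx.
  by rewrite -(trunc_id Gx) -(trunc_id Ge) gbr_trunc; apply/J_restrict/Jbr.
Qed.

Lemma is_ideal_preimage (alpha : scalars) (I : gel K -> Prop) :
  is_ideal n alpha (@inG K n) -> is_ideal nk alpha I ->
  is_ideal n alpha (fun e => inG n e /\ I (trunc e)).
Proof.
move=> [_ G0 GD GZ Gbr] [_ I0 ID IZ Ibr]; split.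
- by move=> e [].
- by rewrite trunc_gzero.
- by move=> e e' [? ?] [? ?]; rewrite trunc_gadd; split; [apply: GD | apply: ID].
- by move=> r e [? ?]; rewrite trunc_gscale; split; [apply: GZ | apply: IZ].
- move=> x e Gx [Ge Ie]; rewrite -gbr_trunc.
  by split; [apply: Gbr | apply: Ibr => //; apply: inG_trunc].
Qed.

Lemma tail_part_take k0 (e : gel K) :
  tail_part nk k0 e <-> tail_part n k0 e /\ inG nk e.
Proof.
split=> [[Ge e1 vanish] | [[_ e1 vanish] Ge]]; last by [].
by split=> //; split=> //; case/inG_take: Ge.
Qed.

Lemma tail_part_trunc k0 (e : gel K) :
  tail_part n k0 e -> tail_part n k0 (trunc e).
Proof.
move=> [Ge e1 vanish]; split=> // [|i lt_ik0 /=]; last by rewrite vanish ?if_same.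
by case/inG_take: (inG_trunc Ge).
Qed.

Lemma chain_ideals_take (alpha : scalars) (I : gel K -> Prop) :
  ideals_chain n alpha ->
  ((forall e, I e <-> inG nk e) \/
   exists k0, (1 <= k0 <= (size nk).+1)%N /\ forall e, I e <-> tail_part nk k0 e) ->
  is_ideal nk alpha I.
Proof.
move=> chain [I_all | [k0 [k0_range I_tail]]].
  apply: (@is_ideal_ext _ _ _ _ (fun e => inG n e /\ inG nk e)).
    by move=> e; rewrite I_all; split=> [Ge | []//]; split=> //; case/inG_take: Ge.
  apply: is_ideal_restrict; first by apply/chain; left.
  by move=> e /inG_trunc /inG_take[].
apply: (@is_ideal_ext _ _ _ _ (fun e => tail_part n k0 e /\ inG nk e)).
  by move=> e; rewrite I_tail tail_part_take.
apply: is_ideal_restrict; last exact: tail_part_trunc.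
apply/chain; right; exists k0; split=> //.
by move: k0_range; rewrite size_nk => /andP[-> /leq_trans]; apply; rewrite ltnS.
Qed.

Lemma ideal_take_in_chain (alpha : scalars) (I : gel K -> Prop) :
  ideals_chain n alpha -> is_ideal nk alpha I ->
  (forall e, I e <-> inG nk e) \/
  exists k0, (1 <= k0 <= (size nk).+1)%N /\ forall e, I e <-> tail_part nk k0 e.
Proof.
move=> chain I_ideal; have [Isub _ _ _ _] := I_ideal.
pose J e := inG n e /\ I (trunc e).
have I_J e : inG nk e -> I e <-> J e.
  move=> Ge; rewrite /J (trunc_id Ge); split=> [Ie | []//].
  by split=> //; case/inG_take: Ge.
have J_ideal : is_ideal n alpha J.
  by apply: is_ideal_preimage => //; apply/chain; left.
have [J_all | [k0 [k0_range J_tail]]] := proj1 (chain J) J_ideal.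
  left=> e; split=> [/Isub // | Ge].
  by apply/(I_J e Ge)/J_all; case/inG_take: Ge.
right; exists (minn k0 k.+1); split.
  by rewrite size_nk; move: k0_range => /andP[? _]; lia.
move=> e; split=> [Ie | [Ge e1 vanish]].
  have Ge := Isub e Ie.
  have [_ e1 vanish] := proj1 (J_tail e) (proj1 (I_J e Ge) Ie).
  by split=> // i lt_i; apply: vanish; lia.
apply/(I_J e Ge)/J_tail; have [Gn vanish_k] := proj1 (inG_take e) Ge.
split=> // i lt_ik0; case: (leqP i k) => [le_ik | /vanish_k //].
by apply: vanish; lia.
Qed.

Lemma ideals_chain_take (alpha : scalars) :
  ideals_chain n alpha -> ideals_chain nk alpha.
Proof.
move=> chain I; split; [exact: ideal_take_in_chain | exact: chain_ideals_take].
Qed.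

End Truncation.

Theorem lemma4p8 (K : fieldType) (charK : [pchar K] =i pred0) (n : seq int) :
  sl2_chained K n ->
  forall k : nat, (1 <= k <= size n)%N -> sl2_chained K (take k n).
Proof.
move=> [dd_ge0 [alpha [ok nz_alpha lie chain]]] k /andP[k_gt0 le_k_size].
split; first exact: (dd_ge0_take k_gt0 le_k_size).
exists alpha; split.
- exact: (alpha_ok_take k_gt0 le_k_size).
- move=> j; rewrite size_takel // => /andP[le1j lt_jk].
  by apply: nz_alpha; rewrite le1j (leq_trans lt_jk).
- exact: (is_lie_take k_gt0 le_k_size).
- exact: (ideals_chain_take k_gt0 le_k_size).
Qed.
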